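(* Let $r\ge 2$ and $s\ge 1$ be integers. If $F\in\mathcal{F}_r(n)$, then $\lambda(\overline{K}_s\vee F)=\lambda(\overline{K}_s\vee T_r(n))$.
   Context: $\lambda(\cdot)$ is the spectral radius of the adjacency matrix; $T_r(n)$ is the complete $r$-partite graph on $n$ vertices with part sizes differing by at most one; $\overline{K}_s$ is the edgeless graph on $s$ vertices and $\vee$ denotes the join. The family $\mathcal{F}_r(n)$: write $n=ra+b$ with $0\le b<r$ and $a=\lfloor n/r\rfloor\ge 1$. If $b=0$, $\mathcal{F}_r(n)$ is the set of all $(r-1)a$-regular graphs on $n$ vertices. If $1\le b<r$, $\mathcal{F}_r(n)$ is the set of all graphs $G$ on $n$ vertices having a partition $V(G)=X\sqcup Y$ with $|X|=b(a+1)$, $|Y|=(r-b)a$, such that every vertex of $X$ is adjacent to every vertex of $Y$, $G[X]$ is $(b-1)(a+1)$-regular, and $G[Y]$ is $(r-b-1)a$-regular. *)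

From HB Require Import structures.
From mathcomp Require Import all_boot all_order all_algebra all_field.
Set Implicit Arguments. Unset Strict Implicit. Unset Printing Implicit Defensive.
Import Order.TTheory GRing.Theory Num.Theory.
Local Open Scope ring_scope.

Definition simple_graph (n : nat) (e : rel 'I_n) : Prop :=
  symmetric e /\ irreflexive e.

Definition adj_mx (n : nat) (e : rel 'I_n) : 'M[algC]_n :=
  \matrix_(i, j) (e i j)%:R.

(* the eigenvalues of A, with multiplicity: the roots of its characteristic
   polynomial (which splits over the algebraically closed field algC) *)
Definition eigenvalues (n : nat) (A : 'M[algC]_n) : seq algC :=
  sval (closed_field_poly_normal (char_poly A)).

(* spectral radius: the maximum modulus of an eigenvalue (0 for the empty matrix) *)
Definition spectral_radius (n : nat) (A : 'M[algC]_n) : algC :=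
  \big[Num.max/0]_(z <- eigenvalues A) `|z|.

Definition lambda (n : nat) (e : rel 'I_n) : algC := spectral_radius (adj_mx e).

(* Turan graph T_r(n): vertices i, j adjacent iff i and j lie in different
   residue classes mod r; the r classes have sizes differing by at most one. *)
Definition turan (r n : nat) : rel 'I_n := fun i j => (i %% r)%N != (j %% r)%N.

(* join of the edgeless graph on s vertices with a graph e on n vertices;
   vertices of 'I_(s + n): the first s form \overline{K}_s, the last n form e *)
Definition join_empty (s n : nat) (e : rel 'I_n) : rel 'I_(s + n) :=
  fun u v => match split u, split v with
             | inl _, inl _ => false
             | inr x, inr y => e x y
             | _, _ => true
             end.

Definition deg_in (n : nat) (e : rel 'I_n) (S : {set 'I_n}) (x : 'I_n) : nat :=
  #|[set y in S | e x y]|.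

Definition regular (n : nat) (e : rel 'I_n) (k : nat) : Prop :=
  forall x : 'I_n, #|[set y | e x y]| = k.

(* the family F_r(n), with n = r a + b, 0 <= b < r, a = n %/ r >= 1 *)
Definition family_F (r n : nat) (e : rel 'I_n) : Prop :=
  let a := (n %/ r)%N in
  let b := (n %% r)%N in
  simple_graph e /\ (1 <= a)%N /\
  if b == 0%N then regular e ((r - 1) * a)
  else exists X : {set 'I_n},
      [/\ #|X| = (b * (a + 1))%N,
          #|~: X| = ((r - b) * a)%N,
          (forall x y, x \in X -> y \notin X -> e x y),
          (forall x, x \in X -> deg_in e X x = ((b - 1) * (a + 1))%N) &
          (forall y, y \notin X -> deg_in e (~: X) y = ((r - b - 1) * a)%N)].

Arguments turan r n : clear implicits.
Arguments join_empty s {n} e.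

(* Write codeg x for the degree of x in the complement of F.  If non-adjacent
   vertices of F always have equal co-degree, then weighting each vertex x of F
   by 1 / (rho + 1 + codeg x), and each of the s independent vertices by
   Sigma / rho, where Sigma is the total weight on F, gives a positive left
   eigenvector of the adjacency matrix of K_s-bar v F exactly when
   (s + rho) * Sigma = rho: the non-neighbours of x all carry the weight of x.
   For a nonnegative matrix, the eigenvalue of a positive eigenvector is the
   spectral radius.  Every graph of F_r(n), and T_r(n) itself, has a set X of
   b(a+1) vertices with co-degree a, the other (r-b)a vertices having co-degree
   a-1 and being joined to all of X; so the equation for rho only depends on
   r, s and n, and it has a positive root by the intermediate value theorem. *)

From mathcomp Require Import all_boot all_order all_algebra all_field.
From mathcomp Require Import zify ring.
Set Implicit Arguments. Unset Strict Implicit. Unset Printing Implicit Defensive.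
Import Order.TTheory GRing.Theory Num.Theory.

Local Open Scope ring_scope.

Lemma eigenvalue_norm_le m (A : 'M[algC]_m) (v : 'rV_m) rho z :
  (forall i j, 0 <= A i j) -> (forall i, 0 < v 0 i) -> v *m A = rho *: v ->
  eigenvalue A z -> `|z| <= rho.
Proof.
move=> A_ge0 v_gt0 vA /eigenvalueP[w wA w_neq0].
have [j wj_neq0] : exists j, w 0 j != 0.
  apply/existsP; apply: contraNT w_neq0; rewrite negb_exists => /forallP w0.
  by apply/eqP/rowP => k; apply/eqP; rewrite mxE; move/negPn: (w0 k).
pose q i := `|w 0 i| / v 0 i.
have q_real i : q i \is Num.real by rewrite ger0_real // divr_ge0 // ltW.
have [i _ q_max] := @real_arg_maxP _ _ j xpredT q isT (fun i _ => q_real i).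
have le_w k : `|w 0 k| <= q i * v 0 k by rewrite -ler_pdivrMr //; exact: q_max.
have wi_gt0 : 0 < `|w 0 i|.
  have : 0 < q j by rewrite divr_gt0 ?normr_gt0.
  by move/lt_le_trans/(_ (q_max j isT)); rewrite pmulr_lgt0 ?invr_gt0.
rewrite -(ler_pM2r wi_gt0) -normrM.
have -> : z * w 0 i = (w *m A) 0 i by rewrite wA mxE.
rewrite mxE.
apply: le_trans (ler_norm_sum _ _ _) _.
have -> : rho * `|w 0 i| = q i * (v *m A) 0 i.
  by rewrite vA mxE /q mulrCA divfK // gt_eqF.
rewrite mxE mulr_sumr; apply: ler_sum => k _.
by rewrite normrM (ger0_norm (A_ge0 _ _)) mulrA ler_wpM2r ?le_w.
Qed.

Lemma bigmax_norm_real (zs : seq algC) :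
  \big[Num.max/0]_(z <- zs) `|z| \is Num.real.
Proof. by apply: bigmax_real => // z _; apply: normr_real. Qed.

Lemma le_bigmax_norm (zs : seq algC) z :
  z \in zs -> `|z| <= \big[Num.max/0]_(y <- zs) `|y|.
Proof.
elim: zs => // x zs IH.
rewrite inE big_cons comparable_le_max ?real_comparable ?normr_real ?bigmax_norm_real //.
by case/orP=> [/eqP-> | /IH->]; rewrite ?lexx ?orbT.
Qed.

Lemma bigmax_norm_le (zs : seq algC) rho :
  0 <= rho -> (forall z, z \in zs -> `|z| <= rho) ->
  \big[Num.max/0]_(z <- zs) `|z| <= rho.
Proof.
move=> rho_ge0; elim: zs => [|x zs IH] le_rho; first by rewrite big_nil.
rewrite big_cons comparable_ge_max ?real_comparable ?normr_real ?bigmax_norm_real //.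
by rewrite le_rho ?mem_head // IH // => z z_in; rewrite le_rho // inE z_in orbT.
Qed.

Lemma spectral_radius_left_eigen m (A : 'M[algC]_m) (v : 'rV_m) rho :
  (forall i j, 0 <= A i j) -> (forall i, 0 < v 0 i) -> v != 0 -> 0 <= rho ->
  v *m A = rho *: v -> spectral_radius A = rho.
Proof.
move=> A_ge0 v_gt0 v_neq0 rho_ge0 vA.
rewrite /spectral_radius /eigenvalues; case: closed_field_poly_normal => zs /= charE.
have mem_eig z : (z \in zs) = eigenvalue A z.
  rewrite eigenvalue_root_char charE (monicP (char_poly_monic A)) scale1r.
  by rewrite root_prod_XsubC.
have rho_eig : rho \in zs by rewrite mem_eig; apply/eigenvalueP; exists v.
apply/le_anti; rewrite -{2}(ger0_norm rho_ge0) le_bigmax_norm // andbT.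
apply: bigmax_norm_le => // z; rewrite mem_eig.
exact: eigenvalue_norm_le A_ge0 v_gt0 vA.
Qed.

Definition join_row s n (alpha : algC) (f : 'I_n -> algC) : 'rV[algC]_(s + n) :=
  \row_u (if split u is inr y then f y else alpha).

Lemma join_row_left_eigen s n (F : rel 'I_n) (alpha rho : algC) (f : 'I_n -> algC) :
  \sum_y f y = rho * alpha ->
  (forall x, s%:R * alpha + \sum_(y | F y x) f y = rho * f x) ->
  join_row s alpha f *m adj_mx (join_empty s F) = rho *: join_row s alpha f.
Proof.
move=> sum_f eq_f; apply/rowP => j; rewrite !mxE big_split_ord /=.
rewrite /join_row /adj_mx /join_empty.
have splitl i : split (lshift n i : 'I_(s + n)) = inl i := unsplitK (inl i).
have splitr i : split (rshift s i : 'I_(s + n)) = inr i := unsplitK (inr i).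
rewrite -(splitK j); case: (split j) => [k|x] /=; rewrite ?splitl ?splitr.
  under eq_bigr do rewrite !mxE !splitl mulr0.
  under [X in _ + X]eq_bigr do rewrite !mxE splitr splitl mulr1.
  by rewrite big1 // add0r sum_f.
under eq_bigr do rewrite !mxE splitl splitr mulr1.
under [X in _ + X]eq_bigr do rewrite !mxE !splitr.
rewrite sumr_const card_ord -eq_f mulr_natl; congr (_ + _).
rewrite [RHS]big_mkcond; apply: eq_bigr => y _.
by case: (F y x); rewrite ?mulr1 ?mulr0.
Qed.

Definition codeg n (e : rel 'I_n) (x : 'I_n) : nat := #|[set y | (y != x) && ~~ e x y]|.

Lemma sum_nbr_codeg n (F : rel 'I_n) (f : 'I_n -> algC) x :
  simple_graph F -> (forall y, y != x -> ~~ F x y -> f y = f x) ->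
  \sum_(y | F y x) f y = \sum_y f y - (codeg F x).+1%:R * f x.
Proof.
move=> [F_sym F_irr] f_non_nbr.
have nbrE : \sum_(y | F y x) f y = \sum_(y | (y != x) && F y x) f y.
  by apply: eq_bigl => y; case: eqVneq => // ->; rewrite F_irr.
have non_nbrE : \sum_(y | (y != x) && ~~ F y x) f y = (codeg F x)%:R * f x.
  rewrite /codeg mulr_natl -sumr_const; apply: eq_big => [y | y /andP[y_neq y_nadj]].
    by rewrite !inE F_sym.
  by rewrite f_non_nbr // F_sym.
rewrite [\sum_y f y](bigD1 x) //= [\sum_(y | y != x) f y](bigID (F^~ x)) /=.
by rewrite nbrE non_nbrE; ring.
Qed.

Lemma lambda_join_codeg s n (F : rel 'I_n) (rho : algC) :
  simple_graph F ->
  (forall x y, x != y -> ~~ F x y -> codeg F x = codeg F y) -> 0 < rho ->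
  (s%:R + rho) * \sum_y (rho + 1 + (codeg F y)%:R)^-1 = rho ->
  lambda (join_empty s F) = rho.
Proof.
move=> simpleF codeg_eq rho_gt0 rhoE.
pose f y := (rho + 1 + (codeg F y)%:R)^-1.
change ((s%:R + rho) * \sum_y f y = rho) in rhoE.
have f_gt0 y : 0 < f y by rewrite invr_gt0 ltr_wpDr // ltr_wpDr ?ler0n.
pose alpha := (\sum_y f y) / rho.
have rho_neq0 : rho != 0 by rewrite gt_eqF.
have n_gt0 : (0 < n)%N.
  case: posnP rhoE => // n0; rewrite big1 ?mulr0 => [/esym/eqP|y].
    by rewrite (negPf rho_neq0).
  by move: (ltn_ord y); rewrite [n in (_ < n)%N]n0.
have splitr y : split (rshift s y : 'I_(s + n)) = inr y := unsplitK (inr y).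
have sum_nbr x : \sum_(y | F y x) f y = \sum_y f y - (codeg F x).+1%:R * f x.
  apply: sum_nbr_codeg => // y y_neq y_nadj.
  by rewrite /f (codeg_eq x y) // eq_sym.
have s_alpha : s%:R * alpha + \sum_y f y = 1.
  by rewrite /alpha -[RHS](divff rho_neq0) -{2}rhoE; field; exact: rho_neq0.
have fxE x : (rho + 1 + (codeg F x)%:R) * f x = 1.
  by rewrite mulfV // -invr_eq0 (gt_eqF (f_gt0 x)).
apply: (@spectral_radius_left_eigen _ _ (join_row s alpha f)).
- by move=> i j; rewrite mxE ler0n.
- move=> i; rewrite mxE; case: (split i) => // _.
  by rewrite divr_gt0 // -(pmulr_rgt0 _ (ltr_wpDl (ler0n _ s) rho_gt0)) rhoE.
- apply/eqP => /rowP/(_ (rshift s (Ordinal n_gt0))).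
  by rewrite !mxE splitr; apply/eqP; rewrite gt_eqF.
- exact: ltW.
apply: join_row_left_eigen => [|x]; first by rewrite mulrC divfK.
rewrite sum_nbr addrA s_alpha; apply/eqP.
by rewrite subr_eq -mulrDl -natr1 addrA addrAC fxE.
Qed.

Definition codeg_split n (e : rel 'I_n) (X : {set 'I_n}) (k : nat) : Prop :=
  (forall x, codeg e x = (x \in X) + k)%N /\ (forall x y, x \in X -> y \notin X -> e x y).

Lemma lambda_join_codeg_split s n (F : rel 'I_n) X k (rho : algC) :
  simple_graph F -> codeg_split F X k -> 0 < rho ->
  (s%:R + rho) * (#|X|%:R / (rho + k.+2%:R) + #|~: X|%:R / (rho + k.+1%:R)) = rho ->
  lambda (join_empty s F) = rho.
Proof.
move=> [F_sym F_irr] [codegE cross] rho_gt0 rhoE.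
apply: lambda_join_codeg => // [x y _ x_nadj_y|].
  rewrite !codegE; case: (boolP (x \in X)) => xX; case: (boolP (y \in X)) => yX //.
  - by rewrite cross in x_nadj_y.
  - by rewrite F_sym cross in x_nadj_y.
rewrite -[RHS]rhoE (bigID (mem X)) /=; congr (_ * (_ + _)).
  rewrite mulr_natl -sumr_const; apply: eq_bigr => y y_in.
  by rewrite codegE y_in add1n -!natr1; congr (_^-1); ring.
rewrite mulr_natl -sumr_const; apply: eq_big => [y | y y_nin]; first by rewrite inE.
by rewrite codegE (negPf y_nin) add0n -natr1; congr (_^-1); ring.
Qed.

(* The equation of [exists_join_radius] multiplied by (X + d1) (X + d2). *)
Definition join_radius_poly (R : nzRingType) (s d1 d2 c1 c2 : nat) : {poly R} :=
  'X * ('X + d1%:R%:P) * ('X + d2%:R%:P)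
  - ('X + s%:R%:P) * (c1%:R%:P * ('X + d1%:R%:P) + c2%:R%:P * ('X + d2%:R%:P)).

Lemma map_join_radius_poly (R S : nzRingType) (f : {rmorphism R -> S}) s d1 d2 c1 c2 :
  map_poly f (join_radius_poly R s d1 d2 c1 c2) = join_radius_poly S s d1 d2 c1 c2.
Proof.
by rewrite /join_radius_poly !(map_polyC, rmorph_nat, rmorphB, rmorphM, rmorphD) /= map_polyX.
Qed.

Lemma horner_join_radius_poly_nat (R : comNzRingType) s d1 d2 c1 c2 (x : nat) :
  (join_radius_poly R s d1 d2 c1 c2).[x%:R] =
  (x * (x + d1) * (x + d2))%:R - ((x + s) * (c1 * (x + d1) + c2 * (x + d2)))%:R.
Proof. by rewrite !hornerE !(natrM, natrD). Qed.

Lemma exists_join_radius (s d1 d2 c1 c2 : nat) :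
  (0 < s)%N -> (0 < d1)%N -> (0 < d2)%N -> (0 < c1 + c2)%N ->
  exists2 rho : algC, 0 < rho &
    (s%:R + rho) * (c1%:R / (rho + d2%:R) + c2%:R / (rho + d1%:R)) = rho.
Proof.
move=> s_gt0 d1_gt0 d2_gt0 c_gt0.
have p0_lt0 : (join_radius_poly algR s d1 d2 c1 c2).[0%:R] < 0.
  rewrite horner_join_radius_poly_nat sub0r oppr_lt0 ltr0n !add0n muln_gt0 s_gt0.
  by rewrite addn_gt0 !muln_gt0 d1_gt0 d2_gt0 !andbT -addn_gt0.
have pN_ge0 : 0 <= (join_radius_poly algR s d1 d2 c1 c2).[(s + c1 + c2)%:R].
  by rewrite horner_join_radius_poly_nat subr_ge0 ler_nat; nia.
have p_sign := introT andP (conj (ltW p0_lt0) pN_ge0).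
have [x /andP[x_ge0 _] /rootP px] := poly_ivt (ler0n _ _) p_sign.
have x_gt0 : 0 < x.
  rewrite lt_def x_ge0 andbT; apply/eqP => x0.
  have : (join_radius_poly algR s d1 d2 c1 c2).[x] < 0 by rewrite x0.
  by rewrite px ltxx.
(* The order of algR is that of algC, so [0 < x] already says [0 < algRval x]. *)
exists (algRval x) => //; set rho := algRval x.
have : (join_radius_poly algC s d1 d2 c1 c2).[rho] = 0.
  by rewrite -(map_join_radius_poly algRval) horner_map px rmorph0.
have d1_neq0 : rho + d1%:R != 0 by rewrite gt_eqF // ltr_wpDr.
have d2_neq0 : rho + d2%:R != 0 by rewrite gt_eqF // ltr_wpDr.
rewrite !hornerE => /eqP; rewrite subr_eq0 => /eqP prhoE.
apply: (mulIf (mulf_neq0 d1_neq0 d2_neq0)); rewrite [RHS]mulrA prhoE.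
by field; rewrite d1_neq0 d2_neq0.
Qed.

Local Close Scope ring_scope.

Lemma card_ord_count n (P : pred nat) : #|[set i : 'I_n | P i]| = count P (iota 0 n).
Proof.
rewrite -sum1_card -sum1_count (eq_bigl (fun i : 'I_n => P i)) => [|i]; last by rewrite inE.
by rewrite -(big_mkord P (fun _ => 1%N)) /index_iota subn0.
Qed.

Lemma card_mod_lt n r c : 0 < r -> c <= r ->
  #|[set j : 'I_n | j %% r < c]| = c * (n %/ r) + minn c (n %% r).
Proof.
move=> r_gt0 c_le_r; rewrite (card_ord_count n (fun j => j %% r < c)).
elim: n => [|n IH]; first by rewrite div0n mod0n muln0 minn0.
rewrite -addn1 iotaD count_cat IH /= add0n addn0 addn1.
have := divn_eq n r; have := divn_eq n.+1 r; have := ltn_mod n r.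
rewrite divnS // modnS; case: (r %| n.+1) => /=; nia.
Qed.

Lemma codeg_add_deg_in n (e : rel 'I_n) (S : {set 'I_n}) x :
  irreflexive e -> x \in S -> (forall y, y \notin S -> e x y) ->
  codeg e x + deg_in e S x = #|S|.-1.
Proof.
move=> e_irr xS adj_out.
rewrite (cardsD1 x S) xS add1n /= -(cardsID [set y | e x y] (S :\ x)) addnC.
congr (_ + _); apply: eq_card => y; rewrite !inE.
- by case: eqVneq => [->|]; rewrite ?e_irr ?andbF.
- case: eqVneq => _ /=; rewrite ?andbF //.
  by case: (boolP (y \in S)) => [_|/adj_out ->]; rewrite ?andbT ?andbF.
Qed.

Lemma family_codeg_split r n (F : rel 'I_n) : family_F r F ->
  exists X : {set 'I_n}, [/\ #|X| = n %% r * (n %/ r + 1), #|~: X| = (r - n %% r) * (n %/ r)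
                          & codeg_split F X (n %/ r - 1)].
Proof.
move=> [[F_sym F_irr] [a_gt0 +]].
have r_gt0 : 0 < r.
  by apply: contraTT a_gt0; rewrite -!eqn0Ngt => /eqP->; rewrite divn0.
have b_lt_r : n %% r < r by rewrite ltn_mod.
have nE := divn_eq n r.
case: eqP => [b0 F_reg | /eqP b_neq0 [X [cX cXC cross degX degXC]]].
  rewrite b0 addn0 in nE; exists set0.
  rewrite cards0 setC0 cardsT card_ord b0 mul0n subn0; split=> //; first by rewrite mulnC.
  split=> [x | x y]; rewrite inE //.
  have adj_out y : y \notin setT -> F x y by rewrite in_setT.
  have := codeg_add_deg_in F_irr (in_setT x) adj_out.
  rewrite cardsT card_ord /deg_in (eq_card (B := [set y | F x y])) ?F_reg => [|y]; last first.
    by rewrite !inE.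
  nia.
exists X; split=> //; split=> // x.
case: (boolP (x \in X)) => xX.
  have := codeg_add_deg_in F_irr xX (fun y => cross x y xX); rewrite degX // cX.
  nia.
have adj_X y : y \notin ~: X -> F x y by rewrite inE negbK F_sym => /cross; apply.
have xXC : x \in ~: X by rewrite inE.
have := codeg_add_deg_in F_irr xXC adj_X; rewrite degXC // cXC.
nia.
Qed.

Lemma turan_simple r n : simple_graph (turan r n).
Proof. by split=> [i j | i]; rewrite /turan ?eqxx // eq_sym. Qed.

Lemma card_mod_eq n r c : c < r ->
  #|[set j : 'I_n | j %% r == c]| = n %/ r + (c < n %% r).
Proof.
move=> c_lt_r; have r_gt0 : 0 < r by apply: leq_ltn_trans c_lt_r.
have := cardsID [set j : 'I_n | j %% r < c] [set j : 'I_n | j %% r < c.+1].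
have -> : [set j : 'I_n | j %% r < c.+1] :&: [set j : 'I_n | j %% r < c] =
          [set j : 'I_n | j %% r < c].
  by apply/setIidPr/subsetP => j; rewrite !inE => /ltnW.
have -> : [set j : 'I_n | j %% r < c.+1] :\: [set j : 'I_n | j %% r < c] =
          [set j : 'I_n | j %% r == c].
  by apply/setP => j; rewrite !inE ltnS -leqNgt andbC -eqn_leq.
have c_le_r := ltnW c_lt_r.
by rewrite !card_mod_lt //; lia.
Qed.

Lemma turan_codeg_split r n : 0 < n %/ r ->
  exists X : {set 'I_n}, [/\ #|X| = n %% r * (n %/ r + 1), #|~: X| = (r - n %% r) * (n %/ r)
                          & codeg_split (turan r n) X (n %/ r - 1)].
Proof.
move=> a_gt0; have r_gt0 : 0 < r.
  by apply: contraTT a_gt0; rewrite -!eqn0Ngt => /eqP->; rewrite divn0.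
have b_lt_r : n %% r < r by rewrite ltn_mod.
have nE := divn_eq n r.
set X := [set j : 'I_n | j %% r < n %% r].
have cX : #|X| = n %% r * (n %/ r + 1) by rewrite card_mod_lt ?minnn ?(ltnW b_lt_r) //; lia.
exists X; split=> //.
  have := cardsC X; rewrite card_ord cX.
  move: #|~: X| (n %/ r) (n %% r) nE b_lt_r => m a b nE' b_lt; nia.
split=> [x | x y]; last first.
  by rewrite !inE -leqNgt /turan => x_lt y_ge; apply: contraTneq x_lt => ->; rewrite -leqNgt.
have -> : codeg (turan r n) x = #|[set y : 'I_n | y %% r == x %% r] :\ x|.
  by apply: eq_card => y; rewrite !inE /turan negbK [x %% r == _]eq_sym.
have := cardsD1 x [set y : 'I_n | y %% r == x %% r].
rewrite inE eqxx card_mod_eq ?ltn_mod // inE.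
lia.
Qed.

Theorem lemma3p5 (r s n : nat) (hr : (2 <= r)%N) (hs : (1 <= s)%N)
  (F : rel 'I_n) (hF : family_F r F) :
  lambda (join_empty s F) = lambda (join_empty s (turan r n)).
Proof.
have a_gt0 : (0 < n %/ r)%N by case: hF => _ [].
have n_gt0 : (0 < n)%N.
  by apply: contraTT a_gt0; rewrite -!eqn0Ngt => /eqP->; rewrite div0n.
have [X [cX cXC splitF]] := family_codeg_split hF.
have [Y [cY cYC splitT]] := turan_codeg_split a_gt0.
have c_gt0 : (0 < #|X| + #|~: X|)%N by rewrite cardsC card_ord.
have [rho rho_gt0 rhoE] :=
  exists_join_radius (d1 := (n %/ r - 1).+1) (d2 := (n %/ r - 1).+2) hs isT isT c_gt0.
have simpleF : simple_graph F by case: hF.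
rewrite (lambda_join_codeg_split simpleF splitF rho_gt0 rhoE).
by rewrite (lambda_join_codeg_split (turan_simple r n) splitT rho_gt0) // cY cYC -cX -cXC.
Qed.
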